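(* Let $\alpha>1$ be a fixed constant and let $\log$ denote the base-$2$ logarithm. For a positive integer $M$, put $\mathcal{M}=\{1,\dots,M\}$, $K=\lceil(\log M)^{\alpha}\rceil$ and $K'=\lceil(\log K)^{\alpha}\rceil$. For a positive integer $l$ define $\phi_l:\mathbb{N}\to\{1,\dots,l\}$ by $\phi_l(x)=(x \bmod l)+1$, where $x\bmod l$ is the remainder of $x$ upon division by $l$. Let $\mathcal{A}$ be a randomized probable-prime generator: on input a positive integer $N$ and a parameter $\varepsilon>0$ it outputs an integer $p\in\{1,\dots,N\}$ such that every prime $\le N$ is output with the same probability and $\Pr[p \text{ is not prime}]\le\varepsilon$. Consider the following identification scheme over the noiseless binary channel (the receiver observes exactly the transmitted bits). Given a message $m\in\mathcal{M}$, the sender independently draws $k\gets\mathcal{A}(K,\varepsilon)$ and $l\gets\mathcal{A}(K',\varepsilon)$ and transmits the binary representation of $k$ (zero-padded to $\lceil\log K\rceil$ bits), the binary representation of $l$ (zero-padded to $\lceil\log K'\rceil$ bits), and the binary representation of $\phi_l(\phi_k(m))$ (zero-padded to $\lceil\log K'\rceil$ bits). So the block length is $n(M)=\lceil\log K\rceil+2\lceil\log K'\rceil$. A receiver interested in a message $\hat m\in\mathcal{M}$ reads $k,l$ and the tag $t=\phi_l(\phi_k(m))$ and declares ''$\hat m$ was sent'' if and only if $t=\phi_l(\phi_k(\hat m))$. The type I error probability for $m$ is the probability that the receiver interested in $\hat m=m$ declares ''not sent'', and the type II error probability for $m\neq\hat m$ is the probability that the receiver interested in $\hat m$ declares ''$\hat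 m$ was sent'' when $m$ is sent (probabilities over the randomness of $\mathcal{A}$). Then: (1) the type I error probability is $0$ for every $M$ and every $m\in\mathcal{M}$; (2) if the generator parameter $\varepsilon=\varepsilon_M$ is chosen so that $\varepsilon_M\to0$ as $M\to\infty$, then $\max_{m\neq\hat m\in\mathcal{M}}$ of the type II error probability tends to $0$ as $M\to\infty$ (equivalently, as the block length $n(M)\to\infty$); (3) $\displaystyle\lim_{M\to\infty}\frac{\log\log M}{n(M)}=\frac{1}{\alpha}$.
   Context: An example of such a generator $\mathcal{A}$ is repeated uniform sampling from $\{1,\dots,N\}$ followed by a Miller–Rabin primality test with sufficiently many rounds. The quantity $\frac{\log\log M}{n}$ is the (double-logarithmic) identification rate, so (3) says that identification rate $1/\alpha$ (arbitrarily close to $1$) is achieved. *)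

From HB Require Import structures.
From mathcomp Require Import all_boot all_order all_algebra.
From mathcomp Require Import all_classical all_reals all_analysis.
Set Implicit Arguments. Unset Strict Implicit. Unset Printing Implicit Defensive.
Import Order.TTheory GRing.Theory Num.Theory.
Import numFieldNormedType.Exports.
Local Open Scope ring_scope.

Section Defs.
Variable R : realType.

Definition log2 (x : R) : R := ln x / ln 2.

Definition ceil_nat (x : R) : nat := `|Num.ceil x|%N.

Definition Kpar (alpha : R) (M : nat) : nat := ceil_nat (powR (log2 M%:R) alpha).
Definition Kpar' (alpha : R) (M : nat) : nat := Kpar alpha (Kpar alpha M).

Definition phi (l x : nat) : nat := (x %% l).+1.

Definition blocklen (alpha : R) (M : nat) : nat :=
  ceil_nat (log2 (Kpar alpha M)%:R) + 2 * ceil_nat (log2 (Kpar' alpha M)%:R).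

(* A randomized generator is modelled by its output distribution:
   gen N eps x = Pr[ A(N, eps) outputs x ]. *)
Definition prob_prime_generator (gen : nat -> R -> nat -> R) : Prop :=
  forall (N : nat) (eps : R), (2 <= N)%N -> 0 < eps ->
    [/\ (forall x, 0 <= gen N eps x),
        (forall x, gen N eps x != 0 -> (1 <= x <= N)%N),
        \sum_(1 <= x < N.+1) gen N eps x = 1,
        (forall p q, prime p -> prime q -> (p <= N)%N -> (q <= N)%N ->
            gen N eps p = gen N eps q) &
        \sum_(1 <= x < N.+1 | ~~ prime x) gen N eps x <= eps].

(* Probability (over independent k <- A(K,eps), l <- A(K',eps)) that the
   receiver interested in mh declares "mh was sent" when m is sent. *)
Definition accept_prob (gen : nat -> R -> nat -> R) (alpha eps : R)
    (M m mh : nat) : R :=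
  \sum_(1 <= k < (Kpar alpha M).+1) \sum_(1 <= l < (Kpar' alpha M).+1)
     gen (Kpar alpha M) eps k * gen (Kpar' alpha M) eps l *
     (phi l (phi k m) == phi l (phi k mh))%:R.

Definition typeI_err (gen : nat -> R -> nat -> R) (alpha eps : R)
    (M m : nat) : R :=
  \sum_(1 <= k < (Kpar alpha M).+1) \sum_(1 <= l < (Kpar' alpha M).+1)
     gen (Kpar alpha M) eps k * gen (Kpar' alpha M) eps l *
     (phi l (phi k m) != phi l (phi k m))%:R.

Definition typeII_err (gen : nat -> R -> nat -> R) (alpha eps : R)
    (M m mh : nat) : R := accept_prob gen alpha eps M m mh.

(* max over m <> mh in {1,...,M} of the type II error (0 if no such pair) *)
Definition max_typeII (gen : nat -> R -> nat -> R) (alpha eps : R)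
    (M : nat) : R :=
  \big[Num.max/0]_(1 <= m < M.+1)
    \big[Num.max/0]_(1 <= mh < M.+1 | m != mh) typeII_err gen alpha eps M m mh.

End Defs.

From HB Require Import structures.
From mathcomp Require Import all_boot all_order all_algebra.
From mathcomp Require Import all_classical all_reals all_analysis.
From mathcomp Require Import zify ring lra.
Import Order.TTheory GRing.Theory Num.Theory.
Import numFieldNormedType.Exports.
Set Implicit Arguments. Unset Strict Implicit. Unset Printing Implicit Defensive.

(* Type I errors vanish because the receiver recomputes the sender's tag.  For m <> mh a
   tag collision means that l divides |m mod k - mh mod k|, which is nonzero unless k is a
   non-prime or a prime divisor of |m - mh| <= M.  Since d has at most log d prime divisors
   and the generator is uniform on primes, the type II error is at most
   2 eps + log M / pi(K) + log K / pi(K').  Chebyshev's bound pi(N) >= N / (4 log N), from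
   2^n <= C(2n, n) <= (2n)^pi(2n), makes both ratios vanish because K >= (log M)^alpha and
   K' >= (log K)^alpha with alpha > 1.  Finally log K = alpha log log M + O(1) and
   log K' = O(log log log M), so n(M) = alpha log log M + o(log log M). *)

Definition primepi (N : nat) : nat := \sum_(0 <= p < N.+1 | prime p) 1.

Lemma sum1_nat_widen_leq (P : pred nat) m n : m <= n ->
  \sum_(0 <= p < m | P p) 1 <= \sum_(0 <= p < n | P p) 1.
Proof.
move=> mn; rewrite (@big_nat_widen _ _ _ 0 m n) // big_mkcondr /=.
by apply: leq_sum => i _; case: ifP.
Qed.

Lemma primepi_leq m n : m <= n -> primepi m <= primepi n.
Proof. by move=> mn; apply: sum1_nat_widen_leq. Qed.

Lemma primepi_gt0 N : 2 <= N -> 0 < primepi N.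
Proof. by move=> N2; apply: leq_trans (primepi_leq N2); rewrite /primepi unlock. Qed.

Lemma prod_nat_cond_const (r : seq nat) (P : pred nat) c :
  \prod_(i <- r) (if P i then c else 1) = c ^ (\sum_(i <- r | P i) 1).
Proof. by rewrite -big_mkcond big_const_seq sum1_count iter_muln_1. Qed.

Lemma prod_logn_eq d B : 0 < d -> d < B -> \prod_(0 <= p < B) p ^ logn p d = d.
Proof.
move=> d0 dB; have -> : B = B.-1.+1 by lia.
by rewrite -[RHS](partnT d0) (@widen_partn B.-1) //; lia.
Qed.

Lemma exp2_leq_binom_mid n : 2 ^ n <= 'C(n.*2, n).
Proof.
elim: n => [//|n IH]; rewrite doubleS binS expnS.
have -> : 'C(n.*2.+1, n.+1) = 'C(n.*2.+1, n).
  by rewrite -[in RHS]bin_sub; [congr 'C(_, _); lia | lia].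
have := leq_bin2l n (leqnSn n.*2); lia.
Qed.

Lemma logn_fact_widen p m B : prime p -> m < B ->
  logn p m`! = \sum_(1 <= k < B) m %/ p ^ k.
Proof.
move=> pp mB; rewrite logn_fact // [RHS](big_cat_nat _ (n := m.+1)) //=.
rewrite [X in _ = _ + X]big1_seq ?addn0 // => k /andP [_].
rewrite mem_index_iota => /andP [mk _]; apply: divn_small.
by apply: leq_trans (ltn_expl k (prime_gt1 pp)); lia.
Qed.

Lemma divn_double_leq n q : 0 < q -> n.*2 %/ q <= (n %/ q).*2 + (q <= n.*2).
Proof.
move=> q0; case: (leqP q n.*2) => [_|lt]; last by rewrite divn_small.
have := divn_eq n q; have := ltn_pmod n q0.
have := divn_eq n.*2 q; have := ltn_pmod n.*2 q0; nia.
Qed.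

Lemma sum_leq_indicator_le t B : \sum_(1 <= k < B.+1) (k <= t) <= t.
Proof.
suff -> : \sum_(1 <= k < B.+1) (k <= t) = minn B t by rewrite geq_minr.
elim: B => [|B IH]; first by rewrite big_geq //; lia.
by rewrite big_nat_recr //= IH; case: (ltnP B t) => /=; lia.
Qed.

(* By Legendre's formula [logn p 'C(2n, n)] is the sum over [k >= 1] of
   [2n %/ p^k - 2 (n %/ p^k)], whose terms are at most 1 and vanish once [p^k > 2n]. *)
Lemma pfactor_binom_mid_leq p n : prime p -> 0 < n -> p ^ logn p 'C(n.*2, n) <= n.*2.
Proof.
move=> pp n0; have p1 := prime_gt1 pp.
set t := trunc_log p n.*2.
suff : logn p 'C(n.*2, n) <= t.
  by move/(leq_pexp2l (ltnW p1))/leq_trans; apply; apply: trunc_logP; lia.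
have C0 : 0 < 'C(n.*2, n) by rewrite bin_gt0 -addnn leq_addr.
have Cfact := bin_fact (leq_addr n n); rewrite addnK addnn in Cfact.
have := congr1 (logn p) Cfact.
rewrite lognM ?muln_gt0 ?fact_gt0 // lognM ?fact_gt0 //.
rewrite !(@logn_fact_widen p _ n.*2.+1) //; last lia.
have bound : \sum_(1 <= k < n.*2.+1) n.*2 %/ p ^ k <=
    \sum_(1 <= k < n.*2.+1) ((n %/ p ^ k).*2 + (k <= t)).
  apply: leq_sum => k _; have pk0 : 0 < p ^ k by rewrite expn_gt0 prime_gt0.
  apply: leq_trans (divn_double_leq n pk0) _; rewrite leq_add2l.
  by case: (leqP (p ^ k) n.*2) => // /(trunc_log_max p1) ->.
rewrite big_split /= -(big_morph double doubleD double0) in bound.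
have := sum_leq_indicator_le t n.*2; lia.
Qed.

Lemma binom_mid_leq n : 0 < n -> 'C(n.*2, n) <= n.*2 ^ primepi n.*2.
Proof.
move=> n0; set C := 'C(n.*2, n); have C0 : 0 < C by rewrite bin_gt0 -addnn leq_addr.
have CB : C < (C + n.*2).+1 by rewrite ltnS leq_addr.
rewrite -(prod_logn_eq C0 CB) /primepi.
rewrite (@big_nat_widen _ _ _ 0 n.*2.+1 (C + n.*2).+1) ?ltnS ?leq_addl //.
rewrite -prod_nat_cond_const; apply: leq_prod => p _.
case pp: (prime p); last by rewrite lognE pp.
have := pfactor_binom_mid_leq pp n0; rewrite -/C /=; case: ifP => // /negbT.
rewrite -leqNgt; case: (posnP (logn p C)) => [-> //|].
by move/(leq_pexp2l (prime_gt0 pp)); rewrite expn1; lia.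
Qed.

Lemma exp2_half_leq_primepi N : 2 <= N -> 2 ^ N./2 <= N ^ primepi N.
Proof.
move=> N2; have n0 : 0 < N./2 by rewrite half_gt0.
have hN : N./2.*2 <= N by rewrite -{2}(odd_double_half N) leq_addl.
apply: leq_trans (exp2_leq_binom_mid _) _; apply: leq_trans (binom_mid_leq n0) _.
apply: leq_trans (leq_pexp2l _ (primepi_leq hN)) _; first lia.
by case: (primepi N) => // k; rewrite leq_exp2r.
Qed.

Lemma exp2_count_prime_dvd_leq d B : 0 < d ->
  2 ^ (\sum_(0 <= p < B | prime p && (p %| d)) 1) <= d.
Proof.
move=> d0; set B' := maxn B d.+1.
apply: (@leq_trans (2 ^ (\sum_(0 <= p < B' | prime p && (p %| d)) 1))).
  by rewrite leq_pexp2l // sum1_nat_widen_leq // leq_maxl.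
rewrite -prod_nat_cond_const -[leqRHS](@prod_logn_eq d B') ?leq_maxr //.
apply: leq_prod => p _; case: ifP => [/andP [pp pd] | _].
  have : 0 < logn p d by rewrite logn_gt0 mem_primes pp d0.
  move/(leq_pexp2l (prime_gt0 pp)); rewrite expn1; exact/leq_trans/prime_gt1.
exact: pfactor_gt0.
Qed.

Lemma eq_modn_dvd_dist (l x y : nat) : x %% l = y %% l -> l %| `|x - y|.
Proof.
move=> /eqP xy; case: (leqP y x) => [yx | /ltnW xy'].
  by rewrite distnEl // -eqn_mod_dvd.
by rewrite distnEr // -eqn_mod_dvd // eq_sym.
Qed.

Lemma phi_collision_dvd (k l m mh : nat) :
  phi l (phi k m) = phi l (phi k mh) -> l %| `|m %% k - mh %% k|.
Proof.
rewrite /phi => /succn_inj /eq_modn_dvd_dist.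
by rewrite -(distnDr 1 (m %% k)) !addn1.
Qed.

Lemma dist_modn_gt0 (k m mh : nat) : ~~ (k %| `|m - mh|) -> 0 < `|m %% k - mh %% k|.
Proof. by apply: contraR; rewrite -eqn0Ngt distn_eq0 => /eqP /eq_modn_dvd_dist. Qed.

Local Open Scope classical_set_scope.
Local Open Scope ring_scope.

Section Log2.
Variable R : realType.
Implicit Types x y : R.

Lemma ln2_gt0 : 0 < ln (2 : R).
Proof. by rewrite ln_gt0 // ltr1n. Qed.

Lemma ler_log2 x y : 0 < x -> x <= y -> log2 x <= log2 y.
Proof.
move=> x0 xy; rewrite /log2 ler_pM2r ?invr_gt0 ?ln2_gt0 //.
by rewrite ler_ln // posrE (lt_le_trans x0 xy).
Qed.

Lemma log2M x y : 0 < x -> 0 < y -> log2 (x * y) = log2 x + log2 y.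
Proof. by move=> x0 y0; rewrite /log2 lnM ?posrE // mulrDl. Qed.

Lemma log2_powR x a : log2 (x `^ a) = a * log2 x.
Proof. by rewrite /log2 ln_powR mulrA. Qed.

Lemma log2_2 : log2 (2 : R) = 1.
Proof. by rewrite /log2 divff // gt_eqF // ln2_gt0. Qed.

Lemma log2_ge0 x : 1 <= x -> 0 <= log2 x.
Proof. by move=> x1; apply: divr_ge0; [exact: ln_ge0 | exact/ltW/ln2_gt0]. Qed.

Lemma log2_ge x y : 0 < x -> 2 `^ y <= x -> y <= log2 x.
Proof.
move=> x0 /ler_log2; rewrite log2_powR log2_2 mulr1; apply.
by rewrite powR_gt0.
Qed.

Lemma log2_natX (d k : nat) : (0 < d)%N -> log2 (d ^ k)%:R = k%:R * log2 (d%:R : R).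
Proof. by move=> d0; rewrite /log2 natrX lnXn ?ltr0n // mulr_natl mulrnAl. Qed.

Lemma leq_exp2_log2 (c d : nat) : (0 < d)%N -> (2 ^ c <= d)%N -> c%:R <= log2 (d%:R : R).
Proof.
move=> d0 cd; apply: log2_ge; first by rewrite ltr0n.
by rewrite powR_mulrn // -natrX ler_nat.
Qed.

Lemma ln_le_powR x b : 0 < x -> 0 < b -> ln x <= x `^ b / b.
Proof.
move=> x0 b0; rewrite ler_pdivlMr // mulrC -ln_powR.
by apply/ltW/ln_sublinear; rewrite powR_gt0.
Qed.

Lemma log2_nat_ge_near y : \forall M \near \oo, y <= log2 (M%:R : R).
Proof.
apply: filterS (nbhs_infty_ger (Num.max 1 (2 `^ y))) => M.
rewrite ge_max => /andP [M1 My]; apply: log2_ge => //.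
exact: lt_le_trans ltr01 M1.
Qed.

Lemma ceil_nat_bounds x : 0 <= x ->
  x <= (ceil_nat x)%:R /\ (ceil_nat x)%:R < x + 1.
Proof.
move=> x0; have c0 : (0 <= Num.ceil x)%R by rewrite ceil_ge0 (lt_le_trans _ x0) // ltrN10.
rewrite /ceil_nat natr_absz ger0_norm //; split; first exact: ceil_ge.
by rewrite -ltrBlDr; have := ceilB1_lt x; rewrite intrD.
Qed.

Lemma log2_sublinear (A B a e : R) : 0 <= A -> 0 <= B -> 0 <= a -> 0 < e ->
  exists Y : R, forall y, Y <= y -> A + B * log2 (1 + a * y) <= e * y.
Proof.
move=> A0 B0 a0 e0; set c := 2 * Num.sqrt (1 + a) / ln 2.
have c0 : 0 <= c by apply: divr_ge0; [rewrite mulr_ge0 ?sqrtr_ge0 | exact/ltW/ln2_gt0].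
set X := (A + B * c) / e.
have X0 : 0 <= X.
  by apply: divr_ge0; [apply: addr_ge0 => //; exact: mulr_ge0 | exact: ltW e0].
exists (Num.max 1 (X ^+ 2)) => y; rewrite ge_max => /andP [y1 yX].
have y0 : 0 <= y by lra.
set s := Num.sqrt y.
have s1 : 1 <= s by rewrite -sqrtr1 ler_sqrt.
have sX : X <= s by rewrite -(ger0_norm X0) -sqrtr_sqr ler_sqrt // sqrtr_ge0.
have ys : y = s * s by rewrite -expr2 sqr_sqrtr.
have hlog : log2 (1 + a * y) <= c * s.
  have a1 : 0 <= 1 + a by rewrite addr_ge0.
  have ln_le : ln ((1 + a) * y) <= Num.sqrt (1 + a) * s * 2.
    have := @ln_le_powR ((1 + a) * y) 2^-1.
    rewrite invrK powR12_sqrt ?mulr_ge0 // sqrtrM //; apply; first nra.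
    by rewrite invr_gt0.
  apply: (@le_trans _ _ (log2 ((1 + a) * y))); first by apply: ler_log2; nra.
  rewrite /log2 (_ : c * s = Num.sqrt (1 + a) * s * 2 / ln 2); last by rewrite /c; ring.
  by rewrite ler_pM2r // invr_gt0 ln2_gt0.
apply: (@le_trans _ _ ((A + B * c) * s)).
  rewrite mulrDl lerD //; last by rewrite -mulrA ler_wpM2l.
  by rewrite -[leLHS]mulr1 ler_wpM2l.
by rewrite ys [e * _]mulrA ler_wpM2r ?(le_trans ler01 s1) // -ler_pdivrMl // mulrC.
Qed.

End Log2.

Section PrimeCounting.
Variable R : realType.

Lemma primepi_ge_log2 N : (2 <= N)%N -> N%:R / 4 <= (primepi N)%:R * log2 (N%:R : R).
Proof.
move=> N2; have N0 : (0 < N)%N by apply: ltnW.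
have NX0 : (0 < N ^ primepi N)%N by rewrite expn_gt0 N0.
have := leq_exp2_log2 R NX0 (exp2_half_leq_primepi N2).
rewrite log2_natX // => h; apply: (le_trans _ h).
have : (N <= 4 * N./2)%N by have := odd_double_half N; case: (odd N) => /=; lia.
by rewrite ler_pdivrMr // mulrC -natrM ler_nat.
Qed.

Lemma primepi_ge_powR b N : 0 < b -> (2 <= N)%N ->
  b * ln 2 / 4 * N%:R `^ (1 - b) <= (primepi N)%:R :> R.
Proof.
move=> b0 N2; have N0 : (0 : R) < N%:R by rewrite ltr0n; lia.
have Nb0 : 0 < N%:R `^ b by rewrite powR_gt0.
have bl0 : 0 < b * ln (2 : R) by rewrite mulr_gt0 ?ln2_gt0.
have hlog : log2 (N%:R : R) <= N%:R `^ b / (b * ln 2).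
  by rewrite /log2 invfM mulrA ler_pM2r ?invr_gt0 ?ln2_gt0 // ln_le_powR.
have key := le_trans (primepi_ge_log2 N2) (ler_wpM2l (ler0n _ _) hlog).
have -> : b * ln 2 / 4 * N%:R `^ (1 - b) = (N%:R / 4) / (N%:R `^ b / (b * ln 2)).
  rewrite powRB ?(gt_eqF N0) ?implybT // powRr1 ?ltW //.
  by field; rewrite !gt_eqF ?ln2_gt0.
by rewrite ler_pdivrMr ?divr_gt0.
Qed.

(* [pi(N) >= c N^(1 - b)] with [b = (alpha - 1) / (2 alpha)], and [N >= y^alpha] turns
   [N^(1 - b)] into [y^(1 + g)] with [g = (alpha - 1) / 2 > 0]. *)
Lemma ratio_primepi_small (alpha e : R) : 1 < alpha -> 0 < e ->
  exists Y : R, forall y, Y <= y -> forall N : nat, y `^ alpha <= N%:R ->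
    y / (primepi N)%:R <= e.
Proof.
move=> a1 e0; set b := (alpha - 1) / (2 * alpha); set g := (alpha - 1) / 2.
set c := b * ln (2 : R) / 4.
have b0 : 0 < b by apply: divr_gt0; [rewrite subr_gt0 | apply: mulr_gt0]; lra.
have g0 : 0 < g by apply: divr_gt0; rewrite ?subr_gt0.
have c0 : 0 < c by apply: divr_gt0 => //; apply: mulr_gt0 => //; apply: ln2_gt0.
have ce0 : 0 < c * e by apply: mulr_gt0.
exists (Num.max 2 ((c * e)^-1 `^ g^-1)) => y; rewrite ge_max => /andP [y2 yY] N yN.
have y1 : 1 <= y by lra.
have y0 : 0 < y by lra.
have N2 : (2 <= N)%N.
  rewrite -(ler_nat R); apply: le_trans y2 (le_trans _ yN).
  by apply: le1r_powR; lra.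
have hpi : c * (y * y `^ g) <= (primepi N)%:R.
  apply: (le_trans _ (primepi_ge_powR b0 N2)); rewrite -/c ler_pM2l //.
  have -> : y * y `^ g = (y `^ alpha) `^ (1 - b).
    rewrite -powRrM -[X in X * _](powRr1 (ltW y0)) -powRD ?(gt_eqF y0) ?implybT //.
    by congr (_ `^ _); rewrite /b /g; field; rewrite gt_eqF //; lra.
  apply: ge0_ler_powR; rewrite ?nnegrE ?powR_ge0 ?ler0n //.
  by rewrite subr_ge0 /b ler_pdivrMr ?mulr_gt0 //; lra.
have hg : (c * e)^-1 <= y `^ g.
  have cei0 : 0 < (c * e)^-1 by rewrite invr_gt0.
  rewrite -[leLHS](powRr1 (ltW cei0)) -(mulVf (lt0r_neq0 g0)) powRrM.
  by apply: ge0_ler_powR; rewrite ?nnegrE ?powR_ge0 ?(ltW g0) ?(ltW y0).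
have pi0 : (0 : R) < (primepi N)%:R by rewrite ltr0n primepi_gt0.
rewrite ler_pdivrMr //; apply: le_trans (ler_wpM2l (ltW e0) hpi).
rewrite (_ : e * _ = y * (c * e * y `^ g)); last by ring.
rewrite -[X in X <= _]mulr1 ler_pM2l // -(mulfV (lt0r_neq0 ce0)) ler_pM2l //.
Qed.

End PrimeCounting.

Lemma sumr_cond_const (R : numDomainType) (I : eqType) (r : seq I) (P : pred I)
    (F : I -> R) (c : R) :
  (forall i, i \in r -> P i -> F i = c) ->
  \sum_(i <- r | P i) F i = (\sum_(i <- r | P i) 1)%N%:R * c.
Proof.
move=> Fc; rewrite natr_sum mulr_suml big_seq_cond [RHS]big_seq_cond.
by apply: eq_bigr => i /andP [ri Pi]; rewrite mul1r Fc.
Qed.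

Lemma sumr_mul_indicator (R : numDomainType) (I : Type) (r : seq I) (P : pred I)
    (F : I -> R) :
  \sum_(i <- r) F i * (P i)%:R = \sum_(i <- r | P i) F i.
Proof.
by rewrite [RHS]big_mkcond; apply: eq_bigr => i _; case: (P i); rewrite ?mulr1 ?mulr0.
Qed.

(* A union bound for a two-stage experiment: first [i] is drawn with law [g], then [j]
   with law [h]; the event fails at the first stage with probability at most [a], and at
   the second stage with probability at most [b] given any first-stage success. *)
Lemma sum_pair_orb_le (R : numDomainType) (I J : eqType) (r1 : seq I) (r2 : seq J)
    (g : I -> R) (h : J -> R) (A : pred I) (B : I -> pred J) (a b : R) :
  (forall i, 0 <= g i) -> (forall j, 0 <= h j) ->
  \sum_(i <- r1) g i <= 1 -> \sum_(j <- r2) h j <= 1 ->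
  \sum_(i <- r1 | A i) g i <= a -> 0 <= b ->
  (forall i, i \in r1 -> ~~ A i -> \sum_(j <- r2 | B i j) h j <= b) ->
  \sum_(i <- r1) \sum_(j <- r2) g i * h j * (A i || B i j)%:R <= a + b.
Proof.
move=> g0 h0 gs hs Aa b0 Bb.
apply: (@le_trans _ _ (\sum_(i <- r1) g i * (if A i then 1 else b))).
  rewrite big_seq [leRHS]big_seq; apply: ler_sum => i ri.
  under eq_bigr do rewrite -mulrA; rewrite -mulr_sumr ler_wpM2l //.
  case: ifPn => Ai; first by under eq_bigr do rewrite /= mulr1.
  by rewrite /= sumr_mul_indicator Bb.
rewrite (bigID A) /=; apply: lerD.
  by under eq_bigr => i Ai do rewrite Ai mulr1.
under eq_bigr => i /negbTE -> do rewrite mulrC.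
rewrite -mulr_sumr -[leRHS]mulr1 ler_wpM2l //; apply: le_trans gs.
by rewrite [leRHS](bigID A) /= lerDr sumr_ge0.
Qed.

Section ProbablePrimeGenerator.
Variables (R : realType) (gen : nat -> R -> nat -> R).
Hypothesis gen_ok : prob_prime_generator gen.
Variables (N : nat) (eps : R).
Hypotheses (N2 : (2 <= N)%N) (eps_gt0 : 0 < eps).

Lemma gen_prime_dvd_le d : (0 < d)%N ->
  \sum_(1 <= x < N.+1 | prime x && (x %| d)%N) gen N eps x <= log2 d%:R / (primepi N)%:R.
Proof.
move=> d0; have [g0 _ gsum uniform _] := gen_ok N2 eps_gt0.
have pi0 : (0 : R) < (primepi N)%:R by rewrite ltr0n primepi_gt0.
have on_primes (P : pred nat) :
    \sum_(1 <= x < N.+1 | prime x && P x) gen N eps x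
    = (\sum_(1 <= x < N.+1 | prime x && P x) 1)%N%:R * gen N eps 2.
  apply: sumr_cond_const => x; rewrite mem_index_iota => /andP [_ xN] /andP [px _].
  by apply: uniform; rewrite // -ltnS.
have mass2 : (primepi N)%:R * gen N eps 2 <= 1.
  have -> : (primepi N)%:R * gen N eps 2 = \sum_(1 <= x < N.+1 | prime x && true) gen N eps x.
    rewrite on_primes /primepi big_ltn_cond //=; congr (_%:R * _).
    by apply: eq_bigl => x; rewrite andbT.
  under eq_bigl do rewrite andbT.
  by rewrite -gsum [leRHS](bigID prime) /= lerDl sumr_ge0.
have q_le : gen N eps 2 <= (primepi N)%:R^-1 by rewrite -(ler_pM2l pi0) mulfV ?gt_eqF.
have count_le : (\sum_(1 <= x < N.+1 | prime x && (x %| d)%N) 1)%N%:R <= log2 (d%:R : R).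
  apply: leq_exp2_log2 => //.
  by have := exp2_count_prime_dvd_leq N.+1 d0; rewrite big_ltn_cond.
rewrite on_primes; apply: le_trans (ler_wpM2r (g0 2) count_le) _.
by rewrite ler_wpM2l // log2_ge0 // ler1n.
Qed.

Lemma gen_nonprime_or_dvd_le d : (0 < d)%N ->
  \sum_(1 <= x < N.+1 | ~~ prime x || (x %| d)%N) gen N eps x
    <= eps + log2 d%:R / (primepi N)%:R.
Proof.
move=> d0; have [_ _ _ _ nonprime] := gen_ok N2 eps_gt0.
rewrite (bigID prime) /= addrC; apply: lerD.
  rewrite (eq_bigl (fun x => ~~ prime x)) => [|x]; first exact: nonprime.
  by case: (prime x); rewrite /= ?andbT ?andbF.
rewrite (eq_bigl (fun x => prime x && (x %| d)%N)) => [|x]; first exact: gen_prime_dvd_le.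
by case: (prime x); rewrite /= ?andbT ?andbF.
Qed.

End ProbablePrimeGenerator.

Lemma dist_inv_ratio_le (R : realFieldType) (a L n e : R) :
  1 < a -> 1 <= L -> a * L <= n -> 0 < e -> n - a * L <= e * (a * a * L) ->
  `|a^-1 - L / n| <= e.
Proof.
move=> a1 L1 aLn e0 gap.
have aL0 : 0 < a * L by rewrite mulr_gt0 //; lra.
have n0 : 0 < n by lra.
have -> : a^-1 - L / n = (n - a * L) / (a * n) by field; rewrite !gt_eqF //; lra.
rewrite ger0_norm; last by rewrite divr_ge0 ?subr_ge0 // mulr_ge0 //; lra.
rewrite ler_pdivrMr ?mulr_gt0 //; last lra.
apply: le_trans gap _; rewrite -!mulrA ler_wpM2l ?ler_wpM2l //; lra.
Qed.

Section Scheme.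
Variables (R : realType) (alpha : R).
Hypothesis alpha_gt1 : 1 < alpha.
Let alpha_gt0 : 0 < alpha := lt_trans ltr01 alpha_gt1.

Lemma typeI_err_eq0 (gen : nat -> R -> nat -> R) (eps : R) (M m : nat) :
  typeI_err gen alpha eps M m = 0.
Proof. by rewrite /typeI_err big1 // => k _; rewrite big1 // => l _; rewrite eqxx mulr0. Qed.

(* The first stage fails when [k] is a non-prime or a prime divisor of [|m - mh|];
   otherwise a tag collision makes [l] a non-prime or a prime divisor of the nonzero
   [|m mod k - mh mod k| < K]. *)
Lemma accept_prob_le (gen : nat -> R -> nat -> R) (eps : R) (M m mh : nat) :
  prob_prime_generator gen -> 0 < eps ->
  (2 <= Kpar alpha M)%N -> (2 <= Kpar' alpha M)%N ->
  (0 < `|m - mh|)%N -> (`|m - mh| <= M)%N ->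
  accept_prob gen alpha eps M m mh <=
    (eps + log2 M%:R / (primepi (Kpar alpha M))%:R)
    + (eps + log2 (Kpar alpha M)%:R / (primepi (Kpar' alpha M))%:R).
Proof.
move=> gen_ok eps0 K2 K'2 D0 DM; rewrite /accept_prob.
set K := Kpar alpha M; set K' := Kpar' alpha M.
have [g0 _ gsum _ _] := gen_ok K eps K2 eps0.
have [h0 _ hsum _ _] := gen_ok K' eps K'2 eps0.
have piK'0 : (0 : R) < (primepi K')%:R by rewrite ltr0n primepi_gt0.
apply: le_trans (sum_pair_orb_le (A := fun k => ~~ prime k || (k %| `|m - mh|)%N)
  (B := fun k l => ~~ prime l || (l %| `|m %% k - mh %% k|)%N) g0 h0 _ _ _ _ _).
- apply: ler_sum => k _; apply: ler_sum => l _.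
  rewrite ler_wpM2l ?mulr_ge0 // ler_nat.
  by case: eqP => // /phi_collision_dvd ->; rewrite !orbT.
- by rewrite gsum.
- by rewrite hsum.
- apply: le_trans (gen_nonprime_or_dvd_le gen_ok K2 eps0 D0) _.
  by rewrite lerD2l ler_wpM2r ?invr_ge0 ?ler0n // ler_log2 ?ltr0n // ler_nat.
- apply: addr_ge0; first exact: ltW.
  by apply: divr_ge0; [apply: log2_ge0; rewrite ler1n; lia | exact: ltW].
move=> k; rewrite mem_index_iota => /andP [_ kK]; rewrite negb_or negbK => /andP [pk nk].
have E0 := dist_modn_gt0 nk.
apply: le_trans (gen_nonprime_or_dvd_le gen_ok K'2 eps0 E0) _.
rewrite lerD2l ler_wpM2r ?invr_ge0 ?ler0n // ler_log2 ?ltr0n // ler_nat.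
by have := ltn_pmod m (prime_gt0 pk); have := ltn_pmod mh (prime_gt0 pk); lia.
Qed.

Lemma powR_le_Kpar M : (log2 M%:R) `^ alpha <= (Kpar alpha M)%:R :> R.
Proof. exact: proj1 (ceil_nat_bounds (powR_ge0 _ _)). Qed.

Lemma log2_le_Kpar M : 1 <= log2 (M%:R : R) -> log2 M%:R <= (Kpar alpha M)%:R :> R.
Proof. by move=> L1; apply: le_trans (powR_le_Kpar M); apply: le1r_powR; rewrite // ltW. Qed.

Lemma max_typeII_le (gen : nat -> R -> nat -> R) (eps : R) M :
  prob_prime_generator gen -> 0 < eps -> (0 < M)%N ->
  (2 <= Kpar alpha M)%N -> (2 <= Kpar' alpha M)%N ->
  max_typeII gen alpha eps M <=
    (eps + log2 M%:R / (primepi (Kpar alpha M))%:R)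
    + (eps + log2 (Kpar alpha M)%:R / (primepi (Kpar' alpha M))%:R).
Proof.
move=> gen_ok eps0 M0 K2 K'2.
have ratio_ge0 (N k : nat) : (0 < N)%N -> 0 <= log2 (N%:R : R) / (primepi k)%:R.
  by move=> N0; rewrite divr_ge0 // log2_ge0 // ler1n.
have bound_ge0 : 0 <= (eps + log2 M%:R / (primepi (Kpar alpha M))%:R)
    + (eps + log2 (Kpar alpha M)%:R / (primepi (Kpar' alpha M))%:R).
  by rewrite !addr_ge0 ?ratio_ge0 ?(ltW eps0) //; apply: ltnW.
rewrite /max_typeII big_seq_cond; apply: bigmax_le => // m /andP [m_in _].
rewrite big_seq_cond; apply: bigmax_le => // mh /andP [mh_in m_mh].
move: m_in mh_in; rewrite !mem_index_iota => m_in mh_in.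
by apply: accept_prob_le => //; move: m_mh; rewrite -distn_eq0; lia.
Qed.

Lemma max_typeII_cvg0 (gen : nat -> R -> nat -> R) (eps : nat -> R) :
  prob_prime_generator gen -> (forall M, 0 < eps M) -> eps @ \oo --> 0 ->
  (fun M : nat => max_typeII gen alpha (eps M) M) @ \oo --> 0.
Proof.
move=> gen_ok eps_gt0 eps_cvg; apply/cvgr0Pnorm_le => e e0.
have [Y small] := ratio_primepi_small alpha_gt1 (divr_gt0 e0 (ltr0n R 4)).
set Y2 := Num.max 2 Y; have Y22 : 2 <= Y2 by rewrite le_max lexx.
have YY2 : Y <= Y2 by rewrite le_max lexx orbT.
have eps_small : \forall M \near \oo, `|eps M| <= e / 4.
  by move/cvgr0Pnorm_le : eps_cvg; apply; rewrite divr_gt0.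
apply: filterS2 (log2_nat_ge_near (Num.max Y2 (2 `^ Y2))) eps_small => M.
set L := log2 (M%:R : R); set K := Kpar alpha M; set K' := Kpar' alpha M.
rewrite ge_max => /andP [LY LLY] epsM.
have L1 : 1 <= L by lra.
have M0 : (0 < M)%N.
  by rewrite lt0n; apply/eqP => Mz; move: L1; rewrite /L Mz /log2 ln0 // mul0r ler10.
have {}LLY : Y2 <= log2 L by apply: log2_ge; lra.
have KL : L <= K%:R := log2_le_Kpar L1.
have K2 : (2 <= K)%N by rewrite -(ler_nat R); lra.
have lKY : Y2 <= log2 (K%:R : R) by apply: le_trans LLY (ler_log2 _ KL); lra.
have K'2 : (2 <= K')%N by rewrite -(ler_nat R); apply: le_trans (log2_le_Kpar _); lra.
rewrite ger0_norm; last exact: bigmax_ge_id.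
apply: le_trans (max_typeII_le gen_ok (eps_gt0 M) M0 K2 K'2) _.
have := small L (le_trans YY2 LY) K (powR_le_Kpar M).
have := small _ (le_trans YY2 lKY) K' (powR_le_Kpar K).
rewrite -/K -/K' -/L; have := le_trans (ler_norm _) epsM; lra.
Qed.

Lemma log2_ceil_powR_bounds y : 1 <= y ->
  alpha * log2 y <= log2 (ceil_nat (y `^ alpha))%:R <= 1 + alpha * log2 y.
Proof.
move=> y1; set P := y `^ alpha.
have P1 : 1 <= P := le_trans y1 (le1r_powR y1 (ltW alpha_gt1)).
have [P_le le_P1] := ceil_nat_bounds (le_trans ler01 P1).
rewrite -log2_powR -/P; apply/andP; split; first by apply: ler_log2; lra.
rewrite -[X in X + _]log2_2 -log2M; try lra.
by apply: ler_log2; lra.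
Qed.

Lemma blocklen_bounds M : 2 <= log2 (M%:R : R) ->
  alpha * log2 (log2 M%:R) <= (blocklen alpha M)%:R <=
    alpha * log2 (log2 M%:R) + 6 + 2 * alpha * log2 (1 + alpha * log2 (log2 M%:R)).
Proof.
move=> L2; set L := log2 (M%:R : R); set LL := log2 L.
have LL1 : 1 <= LL by rewrite -(log2_2 R) ler_log2.
set lK := log2 ((Kpar alpha M)%:R : R).
have /andP [lK1 lK2] : alpha * LL <= lK <= 1 + alpha * LL :=
  log2_ceil_powR_bounds (le_trans (ler1n R 2) L2).
have lK_ge1 : 1 <= lK by apply: le_trans lK1; have := alpha_gt1; nra.
set lK' := log2 ((Kpar' alpha M)%:R : R).
have /andP [lK'1 lK'2] : alpha * log2 lK <= lK' <= 1 + alpha * log2 lK :=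
  log2_ceil_powR_bounds lK_ge1.
have llK : log2 lK <= log2 (1 + alpha * LL) by apply: ler_log2; lra.
have llK0 : 0 <= log2 lK := log2_ge0 lK_ge1.
have [c1 c1'] := ceil_nat_bounds (le_trans ler01 lK_ge1).
have [c2 c2'] := ceil_nat_bounds (le_trans (mulr_ge0 (ltW alpha_gt0) llK0) lK'1).
rewrite /blocklen natrD natrM -/lK -/lK'; apply/andP; split.
  by have := ler0n R (ceil_nat lK'); lra.
have : alpha * log2 lK <= alpha * log2 (1 + alpha * LL) by rewrite ler_pM2l.
lra.
Qed.

Lemma rate_cvg :
  (fun M : nat => log2 (log2 M%:R) / (blocklen alpha M)%:R) @ \oo --> alpha^-1.
Proof.
apply/cvgrPdist_le => e e0.
have [Y small] : exists Y : R, forall y, Y <= y ->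
    6 + 2 * alpha * log2 (1 + alpha * y) <= e * (alpha * alpha) * y.
  by apply: log2_sublinear; rewrite ?mulr_ge0 ?mulr_gt0 // ltW.
apply: filterS (log2_nat_ge_near (Num.max 2 (2 `^ Num.max 1 Y))) => M.
rewrite ge_max => /andP [L2 LLY]; have /andP [lo hi] := blocklen_bounds L2.
have L0 : 0 < log2 (M%:R : R) by lra.
have := log2_ge L0 LLY; rewrite ge_max => /andP [LL1 /small gap].
apply: dist_inv_ratio_le => //; lra.
Qed.

End Scheme.

Theorem theorem8 (R : realType) (alpha : R) (halpha : 1 < alpha)
  (gen : nat -> R -> nat -> R) (hgen : prob_prime_generator gen)
  (eps : nat -> R) (heps : forall M, 0 < eps M) :
  [/\ (forall M m : nat, (1 <= m <= M)%N -> typeI_err gen alpha (eps M) M m = 0),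
      (eps @ \oo --> 0 ->
         (fun M : nat => max_typeII gen alpha (eps M) M) @ \oo --> 0) &
      (fun M : nat => log2 (log2 M%:R) / (blocklen alpha M)%:R) @ \oo --> alpha^-1].
Proof.
split.
- by move=> M m _; apply: typeI_err_eq0.
- exact: max_typeII_cvg0.
- exact: rate_cvg.
Qed.
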